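(* Let $X,Y\subseteq\mathbb{R}^n$ and let $P$ be a coordinate subspace of $\mathbb{R}^n$. Then $\pi_P(X\cup Y)=\pi_PX\cup\pi_PY$. If moreover $X$ and $Y$ are closed and $X\cup Y$ is $\ell_1$-convex, then also $\pi_P(X\cap Y)=\pi_PX\cap\pi_PY$.
   Context: A coordinate subspace is a linear subspace spanned by a subset of the standard basis; $\pi_P$ is orthogonal projection onto $P$. A subset $Z\subseteq\mathbb{R}^n$ is $\ell_1$-convex if for all $z,z'\in Z$, with $D=\sum_i|z_i-z'_i|$, there is $\gamma\colon[0,D]\to Z$ with $\gamma(0)=z,\gamma(D)=z'$ and $\sum_i|\gamma_i(t)-\gamma_i(t')|=|t-t'|$ for all $t,t'$. *)

(* Points of R^n are row vectors 'rV[R]_n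
   with the canonical (product/max-norm) topology of MathComp-Analysis. *)
From HB Require Import structures.
From mathcomp Require Import all_boot all_order all_algebra.
From mathcomp Require Import all_classical all_reals all_analysis.
Set Implicit Arguments. Unset Strict Implicit. Unset Printing Implicit Defensive.
Import Order.TTheory GRing.Theory Num.Theory.
Import numFieldNormedType.Exports.
Local Open Scope classical_set_scope.
Local Open Scope ring_scope.

(* A coordinate subspace P of R^n is the span of {e_i | i \in S} for an index
   set S : {set 'I_n}; orthogonal projection onto it keeps the coordinates in S
   and zeroes the others. *)
Definition coord_proj {R : realType} {n : nat} (S : {set 'I_n}) (x : 'rV[R]_n) : 'rV[R]_n :=
  \row_i (if i \in S then x ord0 i else 0).

Definition l1dist {R : realType} {n : nat} (x y : 'rV[R]_n) : R :=
  \sum_i `|x ord0 i - y ord0 i|.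

(* l1-convexity: any two points are joined inside Z by an l1-geodesic
   gamma : [0, D] -> Z parametrized by arclength. *)
Definition l1_convex {R : realType} {n : nat} (Z : set 'rV[R]_n) : Prop :=
  forall z z', Z z -> Z z' ->
    exists gamma : R -> 'rV[R]_n,
      [/\ gamma 0 = z, gamma (l1dist z z') = z',
          (forall t, 0 <= t <= l1dist z z' -> Z (gamma t)) &
          (forall t t', 0 <= t <= l1dist z z' -> 0 <= t' <= l1dist z z' ->
             l1dist (gamma t) (gamma t') = `|t - t'|)].

(* The union identity holds for any map.  For the intersection, take x in X and
   y in Y with the same projection and join them by an l1-geodesic g inside
   X u Y.  Every point of an l1-geodesic lies metrically between its endpoints,
   and in the l1 metric this forces it to agree with both endpoints on every
   coordinate where they agree; hence g stays in one fibre of the projection.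
   Since g is 1-Lipschitz and starts in the closed set X and ends in the closed
   set Y, the supremum of the times at which it is in X is a time at which it
   is in both. *)
From HB Require Import structures.
From mathcomp Require Import all_boot all_order all_algebra.
From mathcomp Require Import all_classical all_reals all_analysis.
From mathcomp Require Import lra.
Set Implicit Arguments. Unset Strict Implicit. Unset Printing Implicit Defensive.
Import Order.TTheory GRing.Theory Num.Theory.
Import numFieldNormedType.Exports.
Local Open Scope classical_set_scope.
Local Open Scope ring_scope.

Section L1Distance.
Variables (R : realType) (n : nat).
Implicit Types x y z : 'rV[R]_n.

Lemma l1dist_ge0 x y : 0 <= l1dist x y.
Proof. exact: sumr_ge0. Qed.

Lemma ler_coord_l1dist x y i : `|x ord0 i - y ord0 i| <= l1dist x y.
Proof. by rewrite /l1dist (bigD1 i) //= lerDl sumr_ge0. Qed.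

Lemma closed_l1dist_approx (X : set 'rV[R]_n) x :
  closed X -> (forall e, 0 < e -> exists2 z, X z & l1dist x z < e) -> X x.
Proof.
move=> /closure_id cX Xapprox; rewrite cX => B /nbhs_ballP [e e0 eB].
have [z Xz xz] := Xapprox e e0; exists z; split => //; apply: eB.
rewrite -ball_normE /ball_ /= /Num.Def.normr /= mx_normrE.
apply: bigmax_lt => // -[i j] _ /=; rewrite !mxE (ord1 i).
exact: le_lt_trans (ler_coord_l1dist _ _ _) xz.
Qed.

Lemma l1dist_between_coord x y z i :
  l1dist x z + l1dist z y = l1dist x y -> x ord0 i = y ord0 i ->
  z ord0 i = x ord0 i.
Proof.
move=> between xy_i.
pose slack j := `|x ord0 j - z ord0 j| + `|z ord0 j - y ord0 j|
                - `|x ord0 j - y ord0 j|.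
have slack_ge0 j : 0 <= slack j by rewrite subr_ge0 ler_distD.
have slack_sum0 : \sum_j slack j = 0.
  by move: between; rewrite /slack /l1dist !big_split /= sumrN => ->; rewrite subrr.
have := @psumr_eq0P _ _ xpredT slack (fun j _ => slack_ge0 j) slack_sum0 i isT.
rewrite /slack -xy_i subrr normr0 subr0 (distrC (z ord0 i)) => /eqP.
by rewrite paddr_eq0 // normr_eq0 subr_eq0 => /andP[/eqP <-].
Qed.

Lemma coord_proj_between (S : {set 'I_n}) x y z :
  l1dist x z + l1dist z y = l1dist x y ->
  coord_proj S x = coord_proj S y -> coord_proj S z = coord_proj S x.
Proof.
move=> between Pxy; apply/rowP => i; rewrite !mxE; case: ifP => // iS.
apply: l1dist_between_coord between _.
by have := congr1 (fun v : 'rV[R]_n => v ord0 i) Pxy; rewrite !mxE iS.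
Qed.

Lemma geodesic_between x y (g : R -> 'rV[R]_n) t :
  g 0 = x -> g (l1dist x y) = y ->
  (forall t t', 0 <= t <= l1dist x y -> 0 <= t' <= l1dist x y ->
     l1dist (g t) (g t') = `|t - t'|) ->
  0 <= t <= l1dist x y -> l1dist x (g t) + l1dist (g t) y = l1dist x y.
Proof.
move=> g0 gD g_iso /andP[t0 tD]; have D0 := l1dist_ge0 x y.
rewrite -{1}g0 -{1}gD !g_iso ?lexx ?t0 ?tD ?D0 //.
by rewrite sub0r normrN distrC !ger0_norm ?subr_ge0 // addrC subrK.
Qed.

End L1Distance.

Section LipschitzPathCrossing.
Variables (R : realType) (n : nat) (D : R) (g : R -> 'rV[R]_n).
Variables X Y : set 'rV[R]_n.
Hypotheses (D_ge0 : 0 <= D) (cX : closed X) (cY : closed Y).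
Hypotheses (X_start : X (g 0)) (Y_end : Y (g D)).
Hypothesis g_XY : forall t, 0 <= t <= D -> (X `|` Y) (g t).
Hypothesis g_lip : forall t t', 0 <= t <= D -> 0 <= t' <= D ->
  l1dist (g t) (g t') <= `|t - t'|.

Let A := [set t | 0 <= t <= D /\ X (g t)].
Let s := sup A.

Let A0 : A 0.
Proof. by split; rewrite ?lexx ?D_ge0. Qed.

Let A_sup : has_sup A.
Proof. by split; [exists 0 | exists D => t [/andP[]]]. Qed.

Let s_in : 0 <= s <= D.
Proof.
apply/andP; split; first exact: sup_upper_bound.
by apply: ge_sup; [exists 0 | move=> t [/andP[]]].
Qed.

Let X_sup : X (g s).
Proof.
apply: closed_l1dist_approx cX _ => e e0.
have [t [tD Xt] st] := sup_adherent e0 A_sup.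
have ts : t <= s by apply: sup_upper_bound.
exists (g t) => //; apply: le_lt_trans (g_lip s_in tD) _.
rewrite ger0_norm ?subr_ge0 //; rewrite -/s in st; lra.
Qed.

(* Right after [s] the path is outside [X], hence inside [Y]. *)
Let Y_sup : Y (g s).
Proof.
have [->|sD] := eqVneq s D; first exact: Y_end.
have s_ltD : s < D by rewrite lt_neqAle sD; case/andP: s_in.
apply: closed_l1dist_approx cY _ => e e0.
have [t [st tD te]] : exists t, [/\ s < t, t <= D & t - s < e].
  by case: (leP (s + e / 2) D) => ?; [exists (s + e / 2) | exists D]; split; lra.
have tD' : 0 <= t <= D by apply/andP; split => //; case/andP: s_in; lra.
have [Xt|Yt] := g_XY tD'.
  have : t <= s by exact: sup_upper_bound.
  lra.
exists (g t) => //; apply: le_lt_trans (g_lip s_in tD') _.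
by rewrite distrC gtr0_norm ?subr_gt0.
Qed.

Lemma lipschitz_path_crosses : exists2 t, 0 <= t <= D & (X `&` Y) (g t).
Proof. by exists s. Qed.

End LipschitzPathCrossing.

Theorem corollary2p5 (R : realType) (n : nat) (S : {set 'I_n})
    (X Y : set 'rV[R]_n) :
  coord_proj S @` (X `|` Y) = coord_proj S @` X `|` coord_proj S @` Y /\
  (closed X -> closed Y -> l1_convex (X `|` Y) ->
   coord_proj S @` (X `&` Y) = coord_proj S @` X `&` coord_proj S @` Y).
Proof.
split; first exact: image_setU.
move=> cX cY convXY; apply/seteqP; split; first exact: sub_image_setI.
move=> _ [[x Xx <-] [y Yy Pyx]].
have [g [g0 gD g_XY g_iso]] := convXY x y (or_introl Xx) (or_intror Yy).
have g_lip t t' : 0 <= t <= l1dist x y -> 0 <= t' <= l1dist x y ->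
    l1dist (g t) (g t') <= `|t - t'| by move=> tD t'D; rewrite g_iso.
have X_start : X (g 0) by rewrite g0.
have Y_end : Y (g (l1dist x y)) by rewrite gD.
have [t tD XYt] :=
  lipschitz_path_crosses (l1dist_ge0 x y) cX cY X_start Y_end g_XY g_lip.
exists (g t) => //.
exact: coord_proj_between (geodesic_between g0 gD g_iso tD) (esym Pyx).
Qed.
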